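(* Let $a,b>0$ be constants. Let $G=(V,E)$ be a graph with $n$ vertices, $m\ge1$ edges, degeneracy $d$, clique number $\omega$ and clique distance $\sigma$, and let $(\mathcal{C},\mathcal{L})$ be a DCC representation of $G$ with $\mathcal{C}=\{C_\ell\}_{\ell\in I}$ composition-minimal, $\|\mathcal{C}\|\le a\,m$ and $|\mathcal{C}|\le b\,\sigma$. Then there is a constant $c$ depending only on $a,b$ such that $$\frac{1}{\binom{n}{2}}\sum_{\{u,v\}\subseteq V,\,u\ne v}\min\{|L_u|,|L_v|\}\le c\,\min\{\sigma,d\}\quad\text{and}\quad \frac1n\sum_{v\in V}\sum_{\ell\in L_v}|C_\ell|\le c\,\omega\,\min\{\sigma,d\}.$$
   Context: All graphs are finite, simple, undirected, with no isolated vertices; $n=|V|$, $m=|E|$. A non-edge is an unordered pair of distinct non-adjacent vertices. A clique is a vertex set inducing a complete subgraph; $\omega$ is the maximum clique size. Clique distance $\sigma:=\binom{n}{2}-m+1$. Degeneracy $d:=\max_{H}\delta_H$ over all subgraphs $H$ of $G$, where $\delta_H$ is the minimum degree of $H$. $\|\mathcal{F}\|:=\sum_{F\in\mathcal{F}}|F|$. A clique cover is an indexed family $\{C_\ell\}_{\ell\in I}$ of cliques of $G$ covering every edge; composition-minimal means that for all distinct indices $i\ne j$ there are $u\in C_i$, $v\in C_j$ with $\{u,v\}$ a non-edge. A DCC representation is a pair $(\mathcal{C},\mathcal{L})$ with $\mathcal{C}$ a clique cover and $\mathcal{L}=\{L_v\}_{v\in V}$, $L_v=\{\ell\in I: v\in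 C_\ell\}$. *)

From mathcomp Require Import all_boot all_order all_algebra.
From mathcomp Require Export reals.
Set Implicit Arguments. Unset Strict Implicit. Unset Printing Implicit Defensive.

Section Graphs.
Variables (T : finType) (e : rel T).

Definition simple_graph : Prop :=
  (forall x, ~~ e x x) /\ (forall x y, e x y = e y x) /\ (forall x, exists y, e x y).

Definition edges : {set {set T}} := [set [set x; y] | x in T, y in T & e x y].
Definition nverts : nat := #|T|.
Definition nedges : nat := #|edges|.

Definition clique_distance : nat := 'C(nverts, 2) - nedges + 1.

Definition non_edge (x y : T) : bool := (x != y) && ~~ e x y.

Definition is_clique (K : {set T}) : bool :=
  [forall x in K, forall y in K, (x != y) ==> e x y].

Definition clique_number : nat := \max_(K : {set T} | is_clique K) #|K|.

Definition is_subgraph (S : {set T}) (F : {set {set T}}) : bool :=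
  (S != set0) && (F \subset edges) && [forall f in F, f \subset S].

Definition sub_degree (F : {set {set T}}) (v : T) : nat := #|[set f in F | v \in f]|.

(* minimum degree of H = (S, F) (S nonempty; #|T| is a neutral upper bound) *)
Definition min_degree (S : {set T}) (F : {set {set T}}) : nat :=
  \big[minn/#|T|]_(v in S) sub_degree F v.

Definition degeneracy : nat :=
  \max_(SF : {set T} * {set {set T}} | is_subgraph SF.1 SF.2) min_degree SF.1 SF.2.

Section Cover.
Variables (I : finType) (C : I -> {set T}).

Definition clique_cover : Prop :=
  (forall l, is_clique (C l)) /\
  (forall x y, e x y -> exists l, (x \in C l) && (y \in C l)).

Definition composition_minimal : Prop :=
  forall i j : I, i != j -> exists u v, [/\ u \in C i, v \in C j & non_edge u v].

Definition Lset (v : T) : {set I} := [set l | v \in C l].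

Definition cover_norm : nat := \sum_(l : I) #|C l|.
End Cover.
End Graphs.

(* Everything is controlled by the size ||C|| = sum_v |L_v| of the cover.
   On the one hand ||C|| <= |C| n <= b sigma n; on the other ||C|| <= a m and
   m <= d n, since peeling off a vertex of minimum degree removes at most d
   edges.  Hence ||C|| <= (a + b) min(sigma, d) n.  Both averages are bounded
   by ||C||: min(|L_u|, |L_v|) <= |L_u| gives a pair sum of at most
   (n - 1) ||C|| / 2 = binom(n,2) ||C|| / n, and |C_l| <= omega gives
   sum_v sum_(l in L_v) |C_l| <= omega ||C||.  So c = a + b works. *)

From mathcomp Require Import all_boot all_order all_algebra.
From mathcomp Require Import ring lra.

Set Implicit Arguments.
Unset Strict Implicit.

Import Order.TTheory GRing.Theory Num.Theory.

Lemma bin2_mul2 n : 'C(n, 2) * 2 = n * n.-1.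
Proof. by case: n => [|n] //; rewrite bin2 muln2 halfK oddM /= andNb subn0. Qed.

Lemma exists_le_bigmin (T : finType) (S : {set T}) (g : T -> nat) x0 :
  S != set0 -> (forall v, g v <= x0) ->
  exists2 v, v \in S & g v <= \big[minn/x0]_(v in S) g v.
Proof.
case/set0Pn => w wS g_le.
apply: (big_ind (fun z => exists2 v, v \in S & g v <= z)) => [|x y|i iS].
- by exists w.
- move=> [v1 v1S le1] [v2 v2S le2]; case: (leqP x y) => xy.
  + by exists v1 => //; rewrite leq_min le1 (leq_trans le1 xy).
  + by exists v2 => //; rewrite leq_min le2 (leq_trans le2 (ltnW xy)) andbT.
- by exists i.
Qed.

Lemma sum_pairs_ltrank (T : finType) (g : T -> T -> nat) :
  (forall u v, g u v = g v u) ->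
  2 * (\sum_u \sum_(v | enum_rank u < enum_rank v) g u v)
  = \sum_u \sum_(v | v != u) g u v.
Proof.
move=> g_sym; rewrite mul2n -addnn {2}(exchange_big_dep xpredT) //= -big_split /=.
apply: eq_bigr => u _.
rewrite big_mkcond [X in _ + X]big_mkcond [RHS]big_mkcond -big_split /=.
apply: eq_bigr => v _; rewrite (g_sym v u) -(inj_eq enum_rank_inj) -val_eqE eq_sym.
by case: ltngtP; rewrite ?addn0.
Qed.

Lemma sum_pairs_minn_le (T : finType) (f : T -> nat) :
  2 * (\sum_u \sum_(v | enum_rank u < enum_rank v) minn (f u) (f v))
  <= #|T|.-1 * \sum_v f v.
Proof.
rewrite sum_pairs_ltrank => [|u v]; last exact: minnC.
rewrite big_distrr /=; apply: leq_sum => u _.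
have -> : #|T|.-1 * f u = \sum_(v | v != u) f u by rewrite sum_nat_const cardC1.
by apply: leq_sum => v _; exact: geq_minl.
Qed.

Section Degeneracy.
Variables (T : finType) (e : rel T).

Lemma sub_degree_le_card (F : {set {set T}}) v :
  F \subset edges e -> sub_degree F v <= #|T|.
Proof.
move=> sFE; apply: (@leq_trans #|[set [set v; y] | y in [set: T]]|).
  apply: subset_leq_card; apply/subsetP => f; rewrite inE => /andP[fF vf].
  case/imset2P: (subsetP sFE f fF) => x y _ _ fxy.
  move: vf; rewrite fxy !inE => /orP[]/eqP->; apply/imsetP.
  + by exists y; rewrite ?inE.
  + by exists x; rewrite ?inE // setUC.
by rewrite -[leqRHS]cardsT leq_imset_card.
Qed.

Lemma min_degree_le_degeneracy S F : is_subgraph e S F -> min_degree S F <= degeneracy e.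
Proof.
exact: (leq_bigmax_cond (F := fun SF : {set T} * _ => min_degree SF.1 SF.2) (S, F)).
Qed.

Lemma card_edges_sub_le (S : {set T}) :
  #|[set f in edges e | f \subset S]| <= degeneracy e * #|S|.
Proof.
have [k cardS] : {k | #|S| = k} by exists #|S|.
rewrite cardS; elim: k S cardS => [|k IHk] S cardS.
  move/eqP: cardS; rewrite muln0 leqn0 !cards_eq0 => /eqP->.
  apply/eqP/setP => f; rewrite !inE; apply/negbTE/andP => -[fE].
  by case/imset2P: fE => x y _ _ -> /subsetP/(_ x); rewrite !inE eqxx => /(_ isT).
set F := [set f in edges e | f \subset S].
have S0 : S != set0 by rewrite -card_gt0 cardS.
have sFE : F \subset edges e by apply/subsetP => f; rewrite inE => /andP[].
have subF : is_subgraph e S F.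
  by rewrite /is_subgraph S0 sFE; apply/forall_inP => f; rewrite inE => /andP[].
have [v vS deg_v] := exists_le_bigmin S0 (fun v => @sub_degree_le_card F v sFE).
have deg_le_d : sub_degree F v <= degeneracy e.
  exact: leq_trans deg_v (min_degree_le_degeneracy subF).
have cardSv : #|S :\ v| = k by move: cardS; rewrite (cardsD1 v) vS => -[].
have sF : F \subset [set f in F | v \in f] :|: [set f in edges e | f \subset S :\ v].
  apply/subsetP => f fF; move: (fF); rewrite inE => /andP[fE fS].
  rewrite !inE fE fS /=; case vf: (v \in f) => //=.
  apply/subsetP => x xf; rewrite !inE (subsetP fS x xf) andbT.
  by apply: contraFneq vf => <-.
apply: leq_trans (subset_leq_card sF) _; apply: leq_trans (leq_card_setU _ _) _.
by rewrite mulnS leq_add // IHk.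
Qed.

Lemma nedges_le_degeneracy : nedges e <= degeneracy e * #|T|.
Proof.
rewrite -cardsT; apply: leq_trans (card_edges_sub_le setT).
by apply/subset_leq_card/subsetP => f fE; rewrite inE fE subsetT.
Qed.

End Degeneracy.

Section CoverNorm.
Variables (T I : finType) (C : I -> {set T}).

Lemma cover_norm_Lset : cover_norm C = \sum_v #|Lset C v|.
Proof.
rewrite /cover_norm; under eq_bigr => l _ do rewrite -sum1_card big_mkcond /=.
rewrite exchange_big; apply: eq_bigr => v _.
by rewrite -sum1_card [RHS]big_mkcond; apply: eq_bigr => l _; rewrite inE.
Qed.

Lemma cover_norm_le : cover_norm C <= #|I| * #|T|.
Proof. by rewrite -sum_nat_const; apply: leq_sum => l _; exact: max_card. Qed.

Lemma sum_Lset_card_le (e : rel T) : (forall l, is_clique e (C l)) ->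
  \sum_v \sum_(l in Lset C v) #|C l| <= clique_number e * cover_norm C.
Proof.
move=> cliqueC; rewrite cover_norm_Lset big_distrr /=; apply: leq_sum => v _.
rewrite mulnC -sum_nat_const; apply: leq_sum => l _.
exact: (leq_bigmax_cond (F := fun K : {set T} => #|K|) (C l) (cliqueC l)).
Qed.

End CoverNorm.

Local Open Scope ring_scope.

Lemma ler_invMl (R : realFieldType) (x y z : R) :
  0 <= x -> 0 <= z -> y <= x * z -> x^-1 * y <= z.
Proof.
rewrite le0r => /orP[/eqP->|x_gt0] z_ge0 y_le; first by rewrite invr0 mul0r.
by rewrite ler_pdivrMl.
Qed.

Lemma cover_norm_le_min (R : realFieldType) (a b : R)
    (T : finType) (e : rel T) (I : finType) (C : I -> {set T}) :
  0 <= a -> 0 <= b ->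
  (cover_norm C)%:R <= a * (nedges e)%:R ->
  (#|I|)%:R <= b * (clique_distance e)%:R ->
  (cover_norm C)%:R <= (a + b) * (minn (clique_distance e) (degeneracy e))%:R * #|T|%:R.
Proof.
move=> a_ge0 b_ge0 normC cardI; set s := clique_distance e; set d := degeneracy e.
have n_ge0 : 0 <= #|T|%:R :> R by [].
have normIT : (cover_norm C)%:R <= #|I|%:R * #|T|%:R :> R.
  by rewrite -natrM ler_nat cover_norm_le.
have mdn : (nedges e)%:R <= d%:R * #|T|%:R :> R.
  by rewrite -natrM ler_nat nedges_le_degeneracy.
case: (leqP s d) => _.
- have : #|I|%:R * #|T|%:R <= b * s%:R * #|T|%:R by rewrite ler_wpM2r.
  have : 0 <= a * s%:R * #|T|%:R by rewrite !mulr_ge0.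
  lra.
- have : a * (nedges e)%:R <= a * (d%:R * #|T|%:R) by rewrite ler_wpM2l.
  have : 0 <= b * d%:R * #|T|%:R by rewrite !mulr_ge0.
  lra.
Qed.

Theorem mainTheorem7 (R : realType) (a b : R) (ha : 0 < a) (hb : 0 < b) :
  exists c : R,
  forall (T : finType) (e : rel T) (I : finType) (C : I -> {set T}),
    simple_graph e ->
    (0 < nedges e)%N ->
    clique_cover e C ->
    composition_minimal e C ->
    (cover_norm C)%:R <= a * (nedges e)%:R ->
    (#|I|)%:R <= b * (clique_distance e)%:R ->
    ('C(nverts T, 2)%:R)^-1 *
      (\sum_(u : T) \sum_(v : T | (enum_rank u < enum_rank v)%N)
         (minn #|Lset C u| #|Lset C v|)%:R)
      <= c * (minn (clique_distance e) (degeneracy e))%:R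
    /\
    (nverts T)%:R^-1 *
      (\sum_(v : T) \sum_(l in Lset C v) (#|C l|)%:R)
      <= c * (clique_number e)%:R * (minn (clique_distance e) (degeneracy e))%:R.
Proof.
exists (a + b) => T e I C _ _ [cliqueC _] _ normC cardI; rewrite /nverts.
have normX := cover_norm_le_min (ltW ha) (ltW hb) normC cardI.
set n := #|T| in normX *; set k := minn _ _ in normX *.
set X := cover_norm C in normX *.
have c_ge0 : 0 <= (a + b) * k%:R by rewrite mulr_ge0 // addr_ge0 // ltW.
split; under eq_bigr do rewrite -natr_sum; rewrite -natr_sum.
- apply: ler_invMl => //.
  have pairs := sum_pairs_minn_le (fun v => #|Lset C v|).
  rewrite -cover_norm_Lset -/X -/n -(ler_nat R) !natrM in pairs.
  have C2 : 'C(n, 2)%:R * 2 = n%:R * n.-1%:R :> R by rewrite -!natrM bin2_mul2.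
  have : n.-1%:R * X%:R <= n.-1%:R * ((a + b) * k%:R * n%:R) :> R by rewrite ler_wpM2l.
  nra.
- have Q := sum_Lset_card_le cliqueC; rewrite -/X -(ler_nat R) natrM in Q.
  have : (clique_number e)%:R * X%:R <= (clique_number e)%:R * ((a + b) * k%:R * n%:R) :> R.
    by rewrite ler_wpM2l.
  move=> ?; apply: ler_invMl => //; first by rewrite mulrAC mulr_ge0.
  lra.
Qed.
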